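(* Let $R$ be a domain and let $G$ be a finite undirected graph without loops with vertex set $A=\{a_1,\dots,a_n\}$, $n\geqslant 2$, such that the complement graph $\overline{G}$ is connected. Suppose the partially commutative Lie algebra $\mathcal{L}(A;G)=L_1\oplus L_2$ is a direct sum of two subalgebras such that for every $i\in\{1,\dots,n\}$ we have $(a_i)_1=a_i+g_i$ and $(a_i)_2=-g_i$ with $g_i\in\mathcal{L}(A;G)$ and $a_i\notin\mathrm{supp}(\omega_1(g_i))$. Then $g_i=0$ for all $i\in\{1,\dots,n\}$.
   Context: All Lie algebras are over the domain $R$. The complement graph $\overline{G}$ has vertex set $A$, with distinct vertices adjacent iff they are not adjacent in $G$. $\mathcal{L}(A;G)$ is the Lie $R$-algebra presented by generators $A$ and relations $[a_p,a_q]=0$ for all edges $\{a_p,a_q\}$ of $G$. Since the relations are multi-homogeneous, every element $h$ is uniquely a sum of nonzero multi-homogeneous components (multi-degree of a Lie monomial = vector counting occurrences of each $a_p$). $\mathrm{supp}(h)$ is the set of $a_p$ occurring with nonzero exponent in the multi-degree of some component of $h$; $\omega_1(h)$ is the sum of the components of length $1$. A direct sum $L=L_1\oplus L_2$ of subalgebras means $L_1,L_2$ are subalgebras, $L=L_1\oplus L_2$ as $R$-modules and $[L_1,L_2]=0$; for $h\in L$, $(h)_1\in L_1$, $(h)_2\in L_2$ are the unique elements with $h=(h)_1+(h)_2$. *)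

From HB Require Import structures.
From mathcomp Require Import all_boot all_order all_algebra.
Set Implicit Arguments. Unset Strict Implicit. Unset Printing Implicit Defensive.
Import GRing.Theory.
Local Open Scope ring_scope.

Record lieAlgebra (R : comNzRingType) := LieAlgebra {
  lie_carrier :> lmodType R;
  lie_br : lie_carrier -> lie_carrier -> lie_carrier;
  lie_brlinl : forall (c : R) (x y z : lie_carrier),
      lie_br (c *: x + y) z = c *: lie_br x z + lie_br y z;
  lie_brlinr : forall (c : R) (x y z : lie_carrier),
      lie_br z (c *: x + y) = c *: lie_br z x + lie_br z y;
  lie_brxx : forall x : lie_carrier, lie_br x x = 0;
  lie_jacobi : forall x y z : lie_carrier,
      lie_br x (lie_br y z) + lie_br y (lie_br z x) + lie_br z (lie_br x y) = 0
}.

Definition lie_hom (R : comNzRingType) (L M : lieAlgebra R) (phi : L -> M) : Prop :=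
  (forall (c : R) (x y : L), phi (c *: x + y) = c *: phi x + phi y) /\
  (forall x y : L, phi (lie_br x y) = lie_br (phi x) (phi y)).

(* (L, a) is a presentation of L(A;G): L is the Lie R-algebra generated by
   a_0..a_{n-1} subject exactly to the relations [a_p,a_q] = 0 for edges
   {p,q} of G (universal property). *)
Definition presented (R : comNzRingType) (n : nat) (G : rel 'I_n)
    (L : lieAlgebra R) (a : 'I_n -> L) : Prop :=
  (forall p q, G p q -> lie_br (a p) (a q) = 0) /\
  forall (M : lieAlgebra R) (f : 'I_n -> M),
    (forall p q, G p q -> lie_br (f p) (f q) = 0) ->
    exists phi : L -> M,
      [/\ lie_hom phi, (forall p, phi (a p) = f p) &
          forall psi : L -> M, lie_hom psi -> (forall p, psi (a p) = f p) ->
            forall x, psi x = phi x].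

Definition compl_graph (n : nat) (G : rel 'I_n) : rel 'I_n :=
  fun p q => (p != q) && ~~ G p q.
Definition graph_connected (n : nat) (E : rel 'I_n) : Prop :=
  forall p q, connect E p q.

Inductive lmono (n : nat) : Type :=
  | LLeaf of 'I_n
  | LNode of lmono n & lmono n.

Fixpoint leval (R : comNzRingType) (n : nat) (L : lieAlgebra R) (a : 'I_n -> L)
    (t : lmono n) : L :=
  match t with
  | LLeaf i => a i
  | LNode t1 t2 => lie_br (leval a t1) (leval a t2)
  end.

Fixpoint lmdeg (n : nat) (t : lmono n) (j : 'I_n) : nat :=
  match t with
  | LLeaf i => nat_of_bool (i == j)
  | LNode t1 t2 => (lmdeg t1 j + lmdeg t2 j)%N
  end.

Definition mhomog (R : comNzRingType) (n : nat) (L : lieAlgebra R) (a : 'I_n -> L)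
    (al : {ffun 'I_n -> nat}) (x : L) : Prop :=
  exists (m : nat) (c : 'I_m -> R) (t : 'I_m -> lmono n),
    (forall k j, lmdeg (t k) j = al j) /\ x = \sum_(k < m) c k *: leval a (t k).

Definition mdecomp (R : comNzRingType) (n : nat) (L : lieAlgebra R) (a : 'I_n -> L)
    (h : L) (m : nat) (al : 'I_m -> {ffun 'I_n -> nat}) (x : 'I_m -> L) : Prop :=
  [/\ injective al, (forall k, x k <> 0 /\ mhomog a (al k) (x k)) &
      h = \sum_(k < m) x k].

Definition in_supp (R : comNzRingType) (n : nat) (L : lieAlgebra R) (a : 'I_n -> L)
    (p : 'I_n) (h : L) : Prop :=
  exists (m : nat) (al : 'I_m -> {ffun 'I_n -> nat}) (x : 'I_m -> L),
    mdecomp a h al x /\ exists k, al k p <> 0%N.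

Definition is_omega1 (R : comNzRingType) (n : nat) (L : lieAlgebra R) (a : 'I_n -> L)
    (h w : L) : Prop :=
  exists (m : nat) (al : 'I_m -> {ffun 'I_n -> nat}) (x : 'I_m -> L),
    mdecomp a h al x /\ w = \sum_(k < m | (\sum_(j < n) al k j == 1)%N) x k.

Definition subalg (R : comNzRingType) (L : lieAlgebra R) (S : L -> Prop) : Prop :=
  [/\ S 0, (forall (c : R) x y, S x -> S y -> S (c *: x + y)) &
      (forall x y, S x -> S y -> S (lie_br x y))].

Definition direct_sum (R : comNzRingType) (L : lieAlgebra R) (L1 L2 : L -> Prop) : Prop :=
  [/\ subalg L1, subalg L2,
      (forall h, exists h1 h2, [/\ L1 h1, L2 h2 & h = h1 + h2]),
      (forall h1 h2 h1' h2', L1 h1 -> L2 h2 -> L1 h1' -> L2 h2' ->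
          h1 + h2 = h1' + h2' -> h1 = h1' /\ h2 = h2') &
      (forall x y, L1 x -> L2 y -> lie_br x y = 0)].

Definition dcomp1 (R : comNzRingType) (L : lieAlgebra R) (L1 L2 : L -> Prop) (h x : L) : Prop :=
  L1 x /\ L2 (h - x).
Definition dcomp2 (R : comNzRingType) (L : lieAlgebra R) (L1 L2 : L -> Prop) (h y : L) : Prop :=
  L2 y /\ L1 (h - y).

(* Let p1, p2 be the projections of L = L1 (+) L2 onto its summands: commuting
   idempotent Lie endomorphisms with p1 + p2 = id.  In a 2-step nilpotent
   quotient of L, the degree-one parts of p1(a_i) and p2(a_i) form matrices P, Q
   with P + Q = 1 whose 2x2 minors P_ir Q_js - P_is Q_jr vanish whenever a_r and
   a_s do not commute.  Over a domain this forces, along every edge {r, s} of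
   the complement graph, columns r and s of P or those of Q to vanish, so by
   connectivity P = 0 or Q = 0.  An idempotent endomorphism whose values on the
   generators have no degree-one part pushes every element into all terms of
   the filtration by monomial length, and these intersect in 0 because L is
   graded, as seen in the truncated current algebras L (x) R[t]/(t^(D+1)).
   Hence L1 = 0 or L2 = 0.  If L2 = 0 then g_i = 0; if L1 = 0 then g_i = -a_i,
   and a_i lies in the support of omega_1(-a_i) = -a_i, which is excluded. *)

From HB Require Import structures.
From mathcomp Require Import all_boot all_order all_algebra.
From mathcomp Require Import ring zify.
From Stdlib Require Import ClassicalEpsilon.
Import GRing.Theory.
Local Open Scope ring_scope.

Set Implicit Arguments. Unset Strict Implicit. Unset Printing Implicit Defensive.

Section LieBracket.
Variables (R : comNzRingType) (L : lieAlgebra R).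
Local Notation br := (@lie_br R L).

Lemma lie_brDl x y z : br (x + y) z = br x z + br y z.
Proof. by have := lie_brlinl 1 x y z; rewrite !scale1r. Qed.

Lemma lie_brDr x y z : br z (x + y) = br z x + br z y.
Proof. by have := lie_brlinr 1 x y z; rewrite !scale1r. Qed.

Lemma lie_br0l z : br 0 z = 0.
Proof. by apply: (@addrI _ (br 0 z)); rewrite -lie_brDl !addr0. Qed.

Lemma lie_br0r z : br z 0 = 0.
Proof. by apply: (@addrI _ (br z 0)); rewrite -lie_brDr !addr0. Qed.

Lemma lie_brZl c x z : br (c *: x) z = c *: br x z.
Proof. by have := lie_brlinl c x 0 z; rewrite !addr0 lie_br0l addr0. Qed.

Lemma lie_brZr c x z : br z (c *: x) = c *: br z x.
Proof. by have := lie_brlinr c x 0 z; rewrite !addr0 lie_br0r addr0. Qed.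

Lemma lie_br_anti x y : br x y = - br y x.
Proof.
have := lie_brxx (x + y); rewrite lie_brDl !lie_brDr !lie_brxx add0r addr0.
by move/eqP; rewrite addr_eq0 => /eqP.
Qed.

Lemma lie_br_sumr I (r : seq I) (P : pred I) (F : I -> L) z :
  br z (\sum_(i <- r | P i) F i) = \sum_(i <- r | P i) br z (F i).
Proof. exact: (big_morph (br z) (fun x y => lie_brDr x y z) (lie_br0r z)). Qed.

End LieBracket.

Section LieHom.
Variables (R : comNzRingType) (L M : lieAlgebra R) (phi : L -> M).
Hypothesis phi_hom : lie_hom phi.

Lemma lie_homD x y : phi (x + y) = phi x + phi y.
Proof. by have := phi_hom.1 1 x y; rewrite !scale1r. Qed.

Lemma lie_hom0 : phi 0 = 0.
Proof. by apply: (@addrI _ (phi 0)); rewrite -lie_homD !addr0. Qed.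

End LieHom.

Section Subalgebra.
Variables (R : comNzRingType) (L : lieAlgebra R) (S : L -> Prop).
Hypothesis S_subalg : subalg S.

Lemma subalg0 : S 0. Proof. by case: S_subalg. Qed.

Lemma subalgZD c x y : S x -> S y -> S (c *: x + y).
Proof. by case: S_subalg => _ + _; apply. Qed.

Lemma subalg_br x y : S x -> S y -> S (lie_br x y).
Proof. by case: S_subalg => _ _; apply. Qed.

(* The subtype machinery needs a boolean predicate; [S] is decided classically. *)
Definition subalg_mem (x : L) : bool :=
  if excluded_middle_informative (S x) then true else false.

Lemma subalg_memP x : reflect (S x) (subalg_mem x).
Proof. by rewrite /subalg_mem; case: excluded_middle_informative => Sx; constructor. Qed.

Fact subalg_mem_submod_closed : submod_closed subalg_mem.
Proof.
split; first exact/subalg_memP/subalg0.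
by move=> c x y /subalg_memP Sx /subalg_memP Sy; apply/subalg_memP/subalgZD.
Qed.

HB.instance Definition _ := GRing.isSubmodClosed.Build R L subalg_mem
  (GRing.submod_closed_semi subalg_mem_submod_closed).

Inductive subalg_type : Type := SubalgElem (x : L) of subalg_mem x.
Definition subalg_val (x : subalg_type) := let: SubalgElem y _ := x in y.
HB.instance Definition _ := [isSub of subalg_type for subalg_val].
HB.instance Definition _ := [Choice of subalg_type by <:].
HB.instance Definition _ := [SubChoice_isSubZmodule of subalg_type by <:].
HB.instance Definition _ := [SubZmodule_isSubLmodule of subalg_type by <:].

Lemma subalg_valP (x : subalg_type) : subalg_mem (val x).
Proof. by case: x. Qed.

Definition sub_br (x y : subalg_type) : subalg_type :=
  SubalgElem (introT (subalg_memP _)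
    (subalg_br (elimT (subalg_memP _) (subalg_valP x))
               (elimT (subalg_memP _) (subalg_valP y)))).

Fact sub_br_linl c (x y z : subalg_type) :
  sub_br (c *: x + y) z = c *: sub_br x z + sub_br y z.
Proof. by apply: val_inj => /=; rewrite lie_brlinl. Qed.

Fact sub_br_linr c (x y z : subalg_type) :
  sub_br z (c *: x + y) = c *: sub_br z x + sub_br z y.
Proof. by apply: val_inj => /=; rewrite lie_brlinr. Qed.

Fact sub_brxx (x : subalg_type) : sub_br x x = 0.
Proof. by apply: val_inj => /=; rewrite lie_brxx. Qed.

Fact sub_br_jacobi (x y z : subalg_type) :
  sub_br x (sub_br y z) + sub_br y (sub_br z x) + sub_br z (sub_br x y) = 0.
Proof. by apply: val_inj => /=; rewrite lie_jacobi. Qed.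

Definition subLie : lieAlgebra R :=
  LieAlgebra sub_br_linl sub_br_linr sub_brxx sub_br_jacobi.

(* The inclusion of [subLie] composed with the extension of [a] to [subLie]
   fixes the generators, hence is the identity. *)
Lemma subalg_full n (G : rel 'I_n) (a : 'I_n -> L) :
  presented G a -> (forall p, S (a p)) -> forall y, S y.
Proof.
move=> [a_rel a_univ] S_a y.
pose f p : subLie := SubalgElem (introT (subalg_memP _) (S_a p)).
have f_rel p q : G p q -> lie_br (f p) (f q) = 0.
  by move=> Gpq; apply: val_inj => /=; rewrite a_rel.
have [phi [phi_hom phi_a _]] := a_univ subLie f f_rel.
have [phi0 [_ _ phi0_uniq]] := a_univ L a a_rel.
have val_phi_hom : lie_hom (fun x => val (phi x) : L).
  by split=> [c x z|x z]; rewrite ?phi_hom.1 ?phi_hom.2.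
have -> : y = val (phi y).
  rewrite (phi0_uniq _ val_phi_hom) => [|p]; last by rewrite phi_a.
  by apply: (phi0_uniq id).
exact/subalg_memP/subalg_valP.
Qed.

End Subalgebra.

Fixpoint lmsize n (t : lmono n) : nat :=
  if t is LNode t1 t2 then (lmsize t1 + lmsize t2)%N else 1%N.

Lemma lmsize_gt0 n (t : lmono n) : (0 < lmsize t)%N.
Proof. by elim: t => //= t1 IH1 t2 _; rewrite addn_gt0 IH1. Qed.

Section MonomialSpan.
Variables (R : comNzRingType) (n : nat) (L : lieAlgebra R) (a : 'I_n -> L).

Inductive mspan (P : pred (lmono n)) : L -> Prop :=
  | mspan0 : mspan P 0
  | mspan_cons c t y of P t & mspan P y : mspan P (c *: leval a t + y).

Implicit Types (P Q S : pred (lmono n)).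

Lemma mspan_leval P t : P t -> mspan P (leval a t).
Proof. by move=> Pt; have := mspan_cons 1 Pt (mspan0 P); rewrite scale1r addr0. Qed.

Lemma mspanD P x y : mspan P x -> mspan P y -> mspan P (x + y).
Proof.
move=> Px Py; elim: Px => [|c t x' Pt _ IH]; first by rewrite add0r.
by rewrite -addrA; apply: mspan_cons.
Qed.

Lemma mspanZ P c x : mspan P x -> mspan P (c *: x).
Proof.
elim=> [|d t y Pt _ IH]; first by rewrite scaler0; apply: mspan0.
by rewrite scalerDr scalerA; apply: mspan_cons.
Qed.

Lemma mspan_sub P Q x : (forall t, P t -> Q t) -> mspan P x -> mspan Q x.
Proof. by move=> PQ; elim=> [|c t y Pt _ IH]; constructor; auto. Qed.

Lemma mspan_br P Q S x y : (forall t u, P t -> Q u -> S (LNode t u)) ->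
  mspan P x -> mspan Q y -> mspan S (lie_br x y).
Proof.
move=> PQS Px Qy; elim: Px => [|c t x' Pt _ IH]; first by rewrite lie_br0l; constructor.
rewrite lie_brDl lie_brZl; apply: mspanD IH; apply: mspanZ.
elim: Qy => [|d u y' Qu _ IHy]; first by rewrite lie_br0r; constructor.
by rewrite lie_brDr lie_brZr; apply: (@mspan_cons _ d (LNode t u)); auto.
Qed.

Lemma mspanT_subalg : subalg (mspan xpredT).
Proof.
split=> [|c x y Sx Sy|x y Sx Sy]; first exact: mspan0.
  by apply: mspanD => //; apply: mspanZ.
exact: mspan_br Sx Sy.
Qed.

Definition mspan_ge d := mspan (fun t => d <= lmsize t)%N.
Definition mspan_le d := mspan (fun t => lmsize t <= d)%N.

Lemma mspan_le_exists x : mspan xpredT x -> exists d, mspan_le d x.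
Proof.
elim=> [|c t y _ _ [d IH]]; first by exists 0%N; apply: mspan0.
exists (maxn (lmsize t) d); apply: mspan_cons; first exact: leq_maxl.
by apply: mspan_sub IH => u /leq_trans; apply; apply: leq_maxr.
Qed.

Lemma mspan_ge_br d e x y :
  mspan_ge d x -> mspan_ge e y -> mspan_ge (d + e) (lie_br x y).
Proof. by apply: mspan_br => t u; apply: leq_add. Qed.

Lemma mspan_ge_mono d e x : (e <= d)%N -> mspan_ge d x -> mspan_ge e x.
Proof. by move=> le_ed; apply: mspan_sub => t; apply: leq_trans. Qed.

End MonomialSpan.

Lemma sumr_antisym (V : zmodType) N (F : 'I_N -> 'I_N -> V) :
  (forall i j, F j i = - F i j) -> (forall i, F i i = 0) ->
  \sum_(i < N) \sum_(j < N) F i j = 0.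
Proof.
move=> F_anti F_diag.
pose upper (i j : 'I_N) := if (i < j)%N then F i j else 0.
have -> : \sum_(i < N) \sum_(j < N) F i j =
          \sum_(i < N) \sum_(j < N) (upper i j - upper j i).
  apply: eq_bigr => i _; apply: eq_bigr => j _; rewrite /upper.
  case: ltngtP => [_|_|/val_inj ->]; first by rewrite subr0.
    by rewrite sub0r F_anti.
  by rewrite F_diag subrr.
under eq_bigr do rewrite sumrB.
by rewrite sumrB exchange_big subrr.
Qed.

Section TruncatedCurrent.
Variables (R : comNzRingType) (L : lieAlgebra R) (D : nat).
Local Notation br := (@lie_br R L).

(* [L (x) R[t]/(t^(D+1))]; [f k] is the coefficient of [t^k]. *)
Definition tcurrent := {ffun 'I_D.+1 -> (L : lmodType R)}.

Definition tcur_br (f g : tcurrent) : tcurrent :=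
  [ffun k : 'I_D.+1 =>
    \sum_(i < D.+1) \sum_(j < D.+1) ((i + j)%N == k)%:R *: br (f i) (g j)].

Fact tcur_br_linl c (f g h : tcurrent) :
  tcur_br (c *: f + g) h = c *: tcur_br f h + tcur_br g h.
Proof.
apply/ffunP => k; rewrite !ffunE scaler_sumr -big_split; apply: eq_bigr => i _.
rewrite scaler_sumr -big_split; apply: eq_bigr => j _.
by rewrite !ffunE lie_brlinl scalerDr !scalerA mulrC.
Qed.

Fact tcur_br_linr c (f g h : tcurrent) :
  tcur_br h (c *: f + g) = c *: tcur_br h f + tcur_br h g.
Proof.
apply/ffunP => k; rewrite !ffunE scaler_sumr -big_split; apply: eq_bigr => i _.
rewrite scaler_sumr -big_split; apply: eq_bigr => j _.
by rewrite !ffunE lie_brlinr scalerDr !scalerA mulrC.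
Qed.

Fact tcur_brxx (f : tcurrent) : tcur_br f f = 0.
Proof.
apply/ffunP => k; rewrite !ffunE; apply: sumr_antisym => [i j|i].
  by rewrite addnC (lie_br_anti (f j)) scalerN.
by rewrite lie_brxx scaler0.
Qed.

Lemma sum_ord_indicator x (F : nat -> R) :
  \sum_(j < D.+1) (x == j :> nat)%:R * F j = (x < D.+1)%:R * F x.
Proof.
rewrite (eq_bigr (fun j : 'I_D.+1 => if j == x :> nat then F j else 0)).
  by rewrite -big_mkcond big_ord1_eq; case: ltnP; rewrite ?mul1r ?mul0r.
by move=> j _; rewrite eq_sym; case: eqP; rewrite ?mul1r ?mul0r.
Qed.

Definition tcur_br3 (f g h : tcurrent) : tcurrent :=
  [ffun k : 'I_D.+1 => \sum_(i < D.+1) \sum_(l < D.+1) \sum_(m < D.+1)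
     ((i + l + m)%N == k)%:R *: br (f i) (br (g l) (h m))].

Lemma tcur_br_brE (f g h : tcurrent) :
  tcur_br f (tcur_br g h) = tcur_br3 f g h.
Proof.
apply/ffunP => k; rewrite !ffunE; apply: eq_bigr => i _.
under eq_bigr => j _ do rewrite ffunE lie_br_sumr scaler_sumr.
rewrite exchange_big; apply: eq_bigr => l _.
under eq_bigr => j _ do rewrite lie_br_sumr scaler_sumr.
rewrite exchange_big; apply: eq_bigr => m _.
under eq_bigr => j _ do rewrite lie_brZr scalerA mulrC.
rewrite -scaler_suml (sum_ord_indicator (l + m) (fun j => ((i + j)%N == k)%:R)).
case: ltnP => [_|lm_big]; first by rewrite mul1r addnA.
suff -> : ((i + l + m)%N == k) = false by rewrite mul0r !scale0r.
by apply: contra_leqF lm_big => /eqP ilm_k; move: (ltn_ord k); lia.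
Qed.

Fact tcur_br_jacobi (f g h : tcurrent) :
  tcur_br f (tcur_br g h) + tcur_br g (tcur_br h f) + tcur_br h (tcur_br f g) = 0.
Proof.
rewrite !tcur_br_brE; apply/ffunP => k; rewrite !ffunE.
have -> : \sum_(i < D.+1) \sum_(l < D.+1) \sum_(m < D.+1)
     ((i + l + m)%N == k)%:R *: br (g i) (br (h l) (f m)) =
   \sum_(i < D.+1) \sum_(l < D.+1) \sum_(m < D.+1)
     ((i + l + m)%N == k)%:R *: br (g l) (br (h m) (f i)).
  under eq_bigr => i _ do rewrite exchange_big.
  rewrite exchange_big; do 3!(apply: eq_bigr => ? _).
  by rewrite addnC addnA.
have -> : \sum_(i < D.+1) \sum_(l < D.+1) \sum_(m < D.+1)
     ((i + l + m)%N == k)%:R *: br (h i) (br (f l) (g m)) =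
   \sum_(i < D.+1) \sum_(l < D.+1) \sum_(m < D.+1)
     ((i + l + m)%N == k)%:R *: br (h m) (br (f i) (g l)).
  rewrite exchange_big; apply: eq_bigr => i _.
  rewrite exchange_big; do 2!(apply: eq_bigr => ? _).
  by rewrite -addnA addnC.
rewrite -!big_split big1 // => i _; rewrite -!big_split big1 // => l _.
by rewrite -!big_split big1 // => m _ /=; rewrite -!scalerDr lie_jacobi scaler0.
Qed.

Definition currentLie : lieAlgebra R :=
  LieAlgebra tcur_br_linl tcur_br_linr tcur_brxx tcur_br_jacobi.

Definition tmono (d : nat) (x : L) : tcurrent :=
  [ffun k : 'I_D.+1 => (d == k :> nat)%:R *: x].

Lemma tcur_br_mono d e x y : tcur_br (tmono d x) (tmono e y) = tmono (d + e) (br x y).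
Proof.
apply/ffunP => k; rewrite !ffunE.
under eq_bigr => i _ do under eq_bigr => j _ do rewrite !ffunE lie_brZl lie_brZr !scalerA.
under eq_bigr => i _ do rewrite -scaler_suml.
rewrite -scaler_suml; congr (_ *: _).
under eq_bigr => i _ do under eq_bigr => j _ do rewrite mulrC.
under eq_bigr => i _ do
  rewrite (sum_ord_indicator e (fun j => ((i + j)%N == k)%:R * (d == i :> nat)%:R))
          mulrA mulrC.
rewrite (sum_ord_indicator d (fun i => (e < D.+1)%:R * ((i + e)%N == k)%:R)).
case: eqP => [de_k|_]; last by rewrite !mulr0.
have [dD eD] : (d < D.+1)%N /\ (e < D.+1)%N by move: (ltn_ord k); rewrite -de_k; lia.
by rewrite dD eD !mul1r.
Qed.

Definition tcur_eval (f : tcurrent) : L := \sum_k f k.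

Lemma tcur_evalZD c f g : tcur_eval (c *: f + g) = c *: tcur_eval f + tcur_eval g.
Proof. by rewrite /tcur_eval scaler_sumr -big_split; apply: eq_bigr => k _; rewrite !ffunE. Qed.

Lemma tcur_eval0 : tcur_eval 0 = 0.
Proof. by rewrite /tcur_eval big1 // => k _; rewrite ffunE. Qed.

Lemma tcur_eval_mono d x : tcur_eval (tmono d x) = (d < D.+1)%:R *: x.
Proof.
rewrite /tcur_eval; under eq_bigr => k _ do rewrite ffunE -[_%:R]mulr1.
by rewrite -scaler_suml (sum_ord_indicator d (fun=> 1)) mulr1.
Qed.

End TruncatedCurrent.

Section PresentedGrading.
Variables (R : comNzRingType) (n : nat) (G : rel 'I_n) (L : lieAlgebra R).
Variable a : 'I_n -> L.
Hypothesis a_pres : presented G a.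

Lemma mspan_full y : mspan a xpredT y.
Proof.
apply: (subalg_full (mspanT_subalg a) a_pres) => p.
exact: (mspan_leval _ (t := LLeaf p)).
Qed.

Lemma mspan_ge1 y : mspan_ge a 1 y.
Proof. exact: mspan_sub (fun t _ => lmsize_gt0 t) (mspan_full y). Qed.

(* Sending [a p] to [a p t] in the truncated current algebra multiplies each
   monomial by [t^(its size)], which separates the sizes [<= D] from [> D]. *)
Lemma mspan_le_ge_eq0 D y : mspan_le a D y -> mspan_ge a D.+1 y -> y = 0.
Proof.
move=> le_y ge_y.
pose f p : currentLie L D := tmono D 1 (a p).
have f_rel p q : G p q -> lie_br (f p) (f q) = 0.
  move=> Gpq; rewrite /= tcur_br_mono a_pres.1 //.
  by apply/ffunP => k; rewrite !ffunE scaler0.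
have [tau [tau_hom tau_a _]] := a_pres.2 _ f f_rel.
have tau_leval t : tau (leval a t) = tmono D (lmsize t) (leval a t).
  elim: t => [p|t IHt u IHu] /=; first exact: tau_a.
  by rewrite tau_hom.2 IHt IHu; exact: tcur_br_mono.
have tau_low z : mspan_le a D z -> tcur_eval (tau z) = z.
  elim=> [|c t z' le_t _ IH]; first by rewrite (lie_hom0 tau_hom) tcur_eval0.
  by rewrite tau_hom.1 tcur_evalZD tau_leval tcur_eval_mono ltnS le_t scale1r IH.
have tau_high z : mspan_ge a D.+1 z -> tcur_eval (tau z) = 0.
  elim=> [|c t z' ge_t _ IH]; first by rewrite (lie_hom0 tau_hom) tcur_eval0.
  by rewrite tau_hom.1 tcur_evalZD tau_leval tcur_eval_mono ltnNge ge_t scale0r scaler0 IH addr0.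
by rewrite -(tau_low y le_y) tau_high.
Qed.

Lemma mspan_ge_eq0 y : (forall d, mspan_ge a d y) -> y = 0.
Proof.
move=> ge_y; have [D le_y] := mspan_le_exists (mspan_full y).
exact: mspan_le_ge_eq0 le_y (ge_y D.+1).
Qed.

End PresentedGrading.

Section TwoStepNilpotent.
Variables (R : comNzRingType) (n : nat) (G : rel 'I_n).

(* A 2-step nilpotent quotient of [L(A;G)]: pairs (degree-one part,
   degree-two part), where the bracket of degree-one parts is the matrix of
   their 2x2 minors, zeroed on the edges of [G]. *)
Definition nil2 := ('rV[R]_n * 'M[R]_n)%type.

Definition nil2_br (x y : nil2) : nil2 :=
  (0, \matrix_(r, s) if G r s then 0 else x.1 0 r * y.1 0 s - x.1 0 s * y.1 0 r).

Fact nil2_br_linl c (x y z : nil2) :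
  nil2_br (c *: x + y) z = c *: nil2_br x z + nil2_br y z.
Proof.
apply: injective_projections => /=; first by rewrite scaler0 addr0.
by apply/matrixP => r s; rewrite !mxE; case: (G r s); [rewrite mulr0 addr0 | ring].
Qed.

Fact nil2_br_linr c (x y z : nil2) :
  nil2_br z (c *: x + y) = c *: nil2_br z x + nil2_br z y.
Proof.
apply: injective_projections => /=; first by rewrite scaler0 addr0.
by apply/matrixP => r s; rewrite !mxE; case: (G r s); [rewrite mulr0 addr0 | ring].
Qed.

Fact nil2_brxx (x : nil2) : nil2_br x x = 0.
Proof.
apply: injective_projections => //=; apply/matrixP => r s; rewrite !mxE.
by case: (G r s); rewrite // mulrC subrr.
Qed.

Fact nil2_br_jacobi (x y z : nil2) :
  nil2_br x (nil2_br y z) + nil2_br y (nil2_br z x) + nil2_br z (nil2_br x y) = 0.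
Proof.
apply: injective_projections => /=; first by rewrite !addr0.
by apply/matrixP => r s; rewrite !mxE; case: (G r s); rewrite ?mulr0 ?subrr ?addr0.
Qed.

Definition nil2Lie : lieAlgebra R :=
  LieAlgebra nil2_br_linl nil2_br_linr nil2_brxx nil2_br_jacobi.

Definition nil2_gen (p : 'I_n) : nil2Lie := (delta_mx 0 p, 0).

Lemma nil2_gen_rel : symmetric G -> forall p q, G p q -> lie_br (nil2_gen p) (nil2_gen q) = 0.
Proof.
move=> G_sym p q Gpq; apply: injective_projections => //=; apply/matrixP => r s.
rewrite !mxE !eqxx /=; case Grs: (G r s) => //.
have rs_pq : ((r == p) && (s == q)) = false.
  by apply/negbTE/andP => -[/eqP rp /eqP sq]; rewrite rp sq Gpq in Grs.
have sr_pq : ((s == p) && (r == q)) = false.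
  by apply/negbTE/andP => -[/eqP sp /eqP rq]; rewrite sp rq G_sym Gpq in Grs.
by rewrite -!natrM !mulnb rs_pq sr_pq subrr.
Qed.

End TwoStepNilpotent.

Definition minors_vanish (R : comNzRingType) n (G : rel 'I_n) (P Q : 'M[R]_n) :=
  forall i j r s, ~~ G r s -> P i r * Q j s = P i s * Q j r.

Section ComplementarySplit.
Variables (R : idomainType) (n : nat) (G : rel 'I_n).
Implicit Types P Q : 'M[R]_n.

Section ComplementEdge.
Variables (P Q : 'M[R]_n).
Hypothesis PQ1 : P + Q = 1%:M.
Hypothesis PQ_minors : minors_vanish G P Q.
Variables (r s : 'I_n).
Hypotheses (rs : r != s) (Grs : ~~ G r s).

Let QE i j : Q i j = (i == j)%:R - P i j.
Proof. by move/matrixP/(_ i j): PQ1; rewrite !mxE => <-; rewrite addrAC subrr add0r. Qed.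

Let P_rs : P r s = 0.
Proof.
have -> : P r s = P r s * Q r r - P r r * Q r s by rewrite !QE eqxx (negbTE rs) /=; ring.
by rewrite (PQ_minors r r Grs) subrr.
Qed.

Let P_sr : P s r = 0.
Proof.
have -> : P s r = P s r * Q s s - P s s * Q s r.
  by rewrite !QE eqxx eq_sym (negbTE rs) /=; ring.
by rewrite (PQ_minors s s Grs) subrr.
Qed.

Let Q_rs : Q r s = 0. Proof. by rewrite QE (negbTE rs) P_rs subrr. Qed.
Let Q_sr : Q s r = 0. Proof. by rewrite QE eq_sym (negbTE rs) P_sr subrr. Qed.

Let P_rr_Q_ss : P r r * Q s s = 0.
Proof. by rewrite (PQ_minors r s Grs) P_rs mul0r. Qed.

Let P_ss_Q_rr : P s s * Q r r = 0.
Proof. by rewrite -(PQ_minors s r Grs) P_sr mul0r. Qed.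

Lemma compl_edge_diag : P r r = 0 \/ Q r r = 0.
Proof.
move/eqP: P_rr_Q_ss; rewrite mulf_eq0 => /orP[/eqP|/eqP Q_ss]; first by left.
have P_ss : P s s = 1 by move/eqP: Q_ss; rewrite QE eqxx subr_eq0 => /eqP <-.
by right; rewrite -[LHS]mul1r -P_ss P_ss_Q_rr.
Qed.

Lemma compl_edge_cols_eq0 : P r r = 0 -> col r P = 0 /\ col s P = 0.
Proof.
move=> P_rr; have Q_rr : Q r r = 1 by rewrite QE eqxx P_rr subr0.
have Q_ss : Q s s = 1.
  by move: P_ss_Q_rr; rewrite Q_rr mulr1 QE eqxx => ->; rewrite subr0.
split; apply/colP => i; rewrite !mxE.
  by have := PQ_minors i s Grs; rewrite Q_ss Q_sr mulr1 mulr0.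
by have := PQ_minors i r Grs; rewrite Q_rs Q_rr mulr1 mulr0 => <-.
Qed.

End ComplementEdge.

Lemma minors_vanishC P Q : minors_vanish G P Q -> minors_vanish G Q P.
Proof. by move=> PQ_minors i j r s Grs; rewrite mulrC -(PQ_minors j i r s Grs) mulrC. Qed.

Lemma compl_edge_cols P Q r s : P + Q = 1%:M -> minors_vanish G P Q ->
  compl_graph G r s ->
  (col r P == 0) && (col s P == 0) || (col r Q == 0) && (col s Q == 0).
Proof.
move=> PQ1 PQ_minors /andP[rs Grs].
case: (compl_edge_diag PQ1 PQ_minors rs Grs) => [P_rr|Q_rr].
  by have [-> ->] := compl_edge_cols_eq0 PQ1 PQ_minors rs Grs P_rr; rewrite eqxx.
have QP1 : Q + P = 1%:M by rewrite addrC.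
by have [-> ->] := compl_edge_cols_eq0 QP1 (minors_vanishC PQ_minors) rs Grs Q_rr; rewrite eqxx orbT.
Qed.

Lemma col_eq0_closed P Q : P + Q = 1%:M -> minors_vanish G P Q ->
  closed (compl_graph G) [pred r | col r P == 0].
Proof.
move=> PQ1 PQ_minors r s e; rewrite !inE.
have col_neq0 x : col x Q == 0 -> col x P == 0 = false.
  move=> /eqP/colP/(_ x) Q_xx; apply/negbTE/eqP => /colP/(_ x) P_xx.
  move/matrixP/(_ x x): PQ1; rewrite !mxE in P_xx Q_xx *.
  by rewrite P_xx Q_xx addr0 eqxx => /eqP; rewrite eq_sym oner_eq0.
case/orP: (compl_edge_cols PQ1 PQ_minors e) => /andP[r0 s0]; first by rewrite r0 s0.
by rewrite !col_neq0.
Qed.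

Lemma compl_connected_split P Q : (1 < n)%N -> graph_connected (compl_graph G) ->
  P + Q = 1%:M -> minors_vanish G P Q -> P = 0 \/ Q = 0.
Proof.
move=> n_gt1 G_conn PQ1 PQ_minors.
pose v0 : 'I_n := Ordinal (ltnW n_gt1).
have [s e0s] : exists s, compl_graph G v0 s.
  have /connectP[[|s p] /=] := G_conn v0 (Ordinal n_gt1); first by move=> _ /(congr1 val).
  by case/andP=> e0s _ _; exists s.
have col_eq0_all (M N : 'M[R]_n) :
    M + N = 1%:M -> minors_vanish G M N -> col v0 M == 0 -> M = 0.
  move=> MN1 MN_minors M0; apply/matrixP => i x.
  have := closed_connect (col_eq0_closed MN1 MN_minors) (G_conn v0 x).
  by rewrite !inE M0 => /esym/eqP/colP/(_ i); rewrite !mxE.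
case/orP: (compl_edge_cols PQ1 PQ_minors e0s) => /andP[col0 _]; [left | right].
  exact: col_eq0_all PQ1 PQ_minors col0.
by apply: col_eq0_all (minors_vanishC PQ_minors) col0; rewrite addrC.
Qed.

End ComplementarySplit.

Section LinearPart.
Variables (R : comNzRingType) (n : nat) (G : rel 'I_n) (L : lieAlgebra R).
Variable a : 'I_n -> L.
Hypothesis a_pres : presented G a.
Variable eta : L -> nil2Lie R G.
Hypothesis eta_hom : lie_hom eta.
Hypothesis eta_gen : forall p, eta (a p) = nil2_gen R G p.

(* [lin y] holds the coefficients of [omega_1(y)] in the generators. *)
Local Notation lin y := (eta y).1.

Definition gen_comb (v : 'rV[R]_n) : L := \sum_j v 0 j *: a j.

Lemma gen_combZD c v w : gen_comb (c *: v + w) = c *: gen_comb v + gen_comb w.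
Proof.
rewrite /gen_comb scaler_sumr -big_split; apply: eq_bigr => j _.
by rewrite !mxE scalerDl scalerA.
Qed.

Lemma gen_comb0 : gen_comb 0 = 0.
Proof. by rewrite /gen_comb big1 // => j _; rewrite mxE scale0r. Qed.

Lemma gen_comb_delta p : gen_comb (delta_mx 0 p) = a p.
Proof.
rewrite /gen_comb (bigD1 p) //= big1 => [|j jp]; first by rewrite mxE !eqxx scale1r addr0.
by rewrite mxE (negbTE jp) andbF scale0r.
Qed.

Lemma sub_lin_mspan_ge2 y : mspan_ge a 2 (y - gen_comb (lin y)).
Proof.
elim: (mspan_full a_pres y) => [|c t z _ _ IH].
  by rewrite (lie_hom0 eta_hom) gen_comb0 subrr; apply: mspan0.
rewrite eta_hom.1 gen_combZD; case: t => [p|t u] /=.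
  by rewrite eta_gen gen_comb_delta opprD addrACA subrr add0r.
rewrite eta_hom.2 gen_comb0 scaler0 add0r -addrA.
apply: (@mspan_cons _ _ _ _ _ c (LNode t u)) => //=.
by have := lmsize_gt0 t; have := lmsize_gt0 u; lia.
Qed.

Lemma lin_eq0_mspan_ge2 y : lin y = 0 -> mspan_ge a 2 y.
Proof. by move=> lin_y; have := sub_lin_mspan_ge2 y; rewrite lin_y gen_comb0 subr0. Qed.

Definition lin_matrix (phi : L -> L) : 'M[R]_n := \matrix_(i, x) lin (phi (a i)) 0 x.

(* An idempotent [phi] killing [omega_1] of the generators raises the
   filtration by one, so [phi y = phi^k y] lies arbitrarily deep in it. *)
Lemma idem_hom_eq0 (phi : L -> L) : lie_hom phi -> (forall x, phi (phi x) = phi x) ->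
  lin_matrix phi = 0 -> forall y, phi y = 0.
Proof.
move=> phi_hom phi_idem phi0 y.
have phi_lin p : lin (phi (a p)) = 0.
  by apply/rowP => x; move/matrixP/(_ p x): phi0; rewrite !mxE.
have phi_leval t : mspan_ge a (lmsize t).+1 (phi (leval a t)).
  elim: t => [p|t IHt u IHu] /=; first exact: lin_eq0_mspan_ge2.
  rewrite phi_hom.2; apply: mspan_ge_mono (mspan_ge_br IHt IHu).
  by rewrite addSn addnS ltnW.
have phi_raise d z : mspan_ge a d z -> mspan_ge a d.+1 (phi z).
  elim=> [|c t z' le_t _ IH]; first by rewrite (lie_hom0 phi_hom); apply: mspan0.
  rewrite phi_hom.1; apply: mspanD IH; apply: mspanZ.
  by apply: mspan_ge_mono (phi_leval t); rewrite ltnS.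
have phi_ge k : mspan_ge a k.+1 (phi y).
  elim: k => [|k IH]; first exact: (mspan_ge1 a_pres (phi y)).
  by rewrite -phi_idem; apply: phi_raise.
by apply: (mspan_ge_eq0 a_pres) => k; apply: mspan_ge_mono (leqnSn k) (phi_ge k).
Qed.

Lemma lin_matrixD p1 p2 : (forall x, p1 x + p2 x = x) ->
  lin_matrix p1 + lin_matrix p2 = 1%:M.
Proof.
move=> p12; apply/matrixP => i x.
have := congr1 (fun z : nil2Lie R G => z.1 0 x) (eta_gen i).
by rewrite -{1}(p12 (a i)) (lie_homD eta_hom) /= !mxE eqxx eq_sym.
Qed.

Lemma nil2_minors x y r s : ~~ G r s ->
  (eta (lie_br x y)).2 r s = lin x 0 r * lin y 0 s - lin x 0 s * lin y 0 r.
Proof. by move=> Grs; rewrite eta_hom.2 mxE (negbTE Grs). Qed.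

Lemma lin_matrix_minors p1 p2 : (forall x y, lie_br (p1 x) (p2 y) = 0) ->
  minors_vanish G (lin_matrix p1) (lin_matrix p2).
Proof.
move=> p12_comm i j r s Grs; apply/eqP; rewrite -subr_eq0 !mxE -nil2_minors //.
by rewrite p12_comm (lie_hom0 eta_hom) mxE.
Qed.

End LinearPart.

Lemma direct_sum_sym (R : comNzRingType) (L : lieAlgebra R) (L1 L2 : L -> Prop) :
  direct_sum L1 L2 -> direct_sum L2 L1.
Proof.
case=> L1_sub L2_sub L12_dec L12_uniq L12_comm; split => //.
- by move=> h; have [h1 [h2 [? ? ->]]] := L12_dec h; exists h2, h1; rewrite addrC.
- move=> h2 h1 h2' h1' L2h2 L1h1 L2h2' L1h1' e.
  suff [-> ->] : h1 = h1' /\ h2 = h2' by [].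
  by apply: L12_uniq; rewrite // addrC e addrC.
- by move=> x y ? ?; rewrite lie_br_anti L12_comm ?oppr0.
Qed.

Section DirectSumProjection.
Variables (R : comNzRingType) (L : lieAlgebra R) (L1 L2 : L -> Prop).
Hypothesis L12 : direct_sum L1 L2.

Let L1_sub : subalg L1. Proof. by case: L12. Qed.
Let L2_sub : subalg L2. Proof. by case: L12. Qed.

Lemma dsproj_ex h : exists x, L1 x /\ L2 (h - x).
Proof.
case: L12 => _ _ L12_dec _ _; have [h1 [h2 [L1h1 L2h2 ->]]] := L12_dec h.
by exists h1; rewrite addrAC subrr add0r.
Qed.

Definition dsproj h := projT1 (constructive_indefinite_description _ (dsproj_ex h)).

Lemma dsprojP h : L1 (dsproj h) /\ L2 (h - dsproj h).
Proof. exact: projT2 (constructive_indefinite_description _ (dsproj_ex h)). Qed.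

Lemma dsproj_uniq h x : L1 x -> L2 (h - x) -> dsproj h = x.
Proof.
move=> L1x L2hx; have [L1p L2hp] := dsprojP h.
case: L12 => _ _ _ L12_uniq _.
apply: (L12_uniq _ _ _ _ L1p L2hp L1x L2hx _).1.
by rewrite addrC subrK addrC subrK.
Qed.

Lemma dsproj_id x : L1 x -> dsproj x = x.
Proof. by move=> L1x; apply: dsproj_uniq; rewrite // subrr; apply: subalg0. Qed.

Lemma dsproj_idem h : dsproj (dsproj h) = dsproj h.
Proof. exact/dsproj_id/(dsprojP h).1. Qed.

Lemma dsproj_hom : lie_hom dsproj.
Proof.
have [_ _ _ _ L12_comm] := L12.
have br_split u1 u2 v1 v2 : L1 u1 -> L2 u2 -> L1 v1 -> L2 v2 ->
    lie_br (u1 + u2) (v1 + v2) = lie_br u1 v1 + lie_br u2 v2.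
  move=> L1u1 L2u2 L1v1 L2v2; rewrite lie_brDl !lie_brDr (L12_comm u1 v2) //.
  by rewrite [lie_br u2 v1]lie_br_anti (L12_comm v1 u2) // oppr0 addr0 add0r.
split=> [c x y|x y]; have [L1x L2x] := dsprojP x; have [L1y L2y] := dsprojP y.
  apply: dsproj_uniq; first exact: subalgZD.
  rewrite opprD addrACA -scalerBr; exact: subalgZD.
apply: dsproj_uniq; first exact: subalg_br.
have := br_split _ _ _ _ L1x L2x L1y L2y; rewrite !(addrC (dsproj _)) !subrK => ->.
by rewrite addrC addKr; apply: subalg_br.
Qed.

End DirectSumProjection.

Lemma complementary_homs_trivial (R : idomainType) n (G : rel 'I_n)
    (L : lieAlgebra R) (a : 'I_n -> L) (p1 p2 : L -> L) :
  (1 < n)%N -> symmetric G -> graph_connected (compl_graph G) -> presented G a ->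
  lie_hom p1 -> lie_hom p2 ->
  (forall x, p1 (p1 x) = p1 x) -> (forall x, p2 (p2 x) = p2 x) ->
  (forall x, p1 x + p2 x = x) -> (forall x y, lie_br (p1 x) (p2 y) = 0) ->
  (forall y, p1 y = 0) \/ (forall y, p2 y = 0).
Proof.
move=> n_gt1 G_sym G_conn a_pres p1_hom p2_hom p1_idem p2_idem p12 p12_comm.
have [eta [eta_hom eta_gen _]] := a_pres.2 _ _ (nil2_gen_rel R G_sym).
have [P0|Q0] := compl_connected_split n_gt1 G_conn
  (lin_matrixD eta_hom eta_gen p12) (lin_matrix_minors a eta_hom p12_comm).
  by left; apply: (idem_hom_eq0 a_pres eta_hom eta_gen p1_hom p1_idem P0).
by right; apply: (idem_hom_eq0 a_pres eta_hom eta_gen p2_hom p2_idem Q0).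
Qed.

Lemma direct_sum_trivial (R : idomainType) n (G : rel 'I_n)
    (L : lieAlgebra R) (a : 'I_n -> L) (L1 L2 : L -> Prop) :
  (1 < n)%N -> symmetric G -> graph_connected (compl_graph G) -> presented G a ->
  direct_sum L1 L2 -> (forall x, L1 x -> x = 0) \/ (forall x, L2 x -> x = 0).
Proof.
move=> n_gt1 G_sym G_conn a_pres L12; have L21 := direct_sum_sym L12.
have p12 x : dsproj L12 x + dsproj L21 x = x.
  have [L1x L2x] := dsprojP L12 x.
  have -> : dsproj L21 x = x - dsproj L12 x.
    by apply: (dsproj_uniq L21 L2x); rewrite opprB addrC subrK.
  by rewrite addrC subrK.
have p12_comm x y : lie_br (dsproj L12 x) (dsproj L21 y) = 0.
  by have [_ _ _ _ -> //] := L12; [apply: (dsprojP L12 x).1 | apply: (dsprojP L21 y).1].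
have [p0|p0] := complementary_homs_trivial n_gt1 G_sym G_conn a_pres
  (dsproj_hom L12) (dsproj_hom L21) (dsproj_idem L12) (dsproj_idem L21) p12 p12_comm;
  [left; move=> x /(dsproj_id L12) <- | right; move=> x /(dsproj_id L21) <-]; exact: p0.
Qed.

Lemma presented_gen_neq0 (R : comNzRingType) n (G : rel 'I_n)
    (L : lieAlgebra R) (a : 'I_n -> L) :
  presented G a -> symmetric G -> forall p, a p != 0.
Proof.
move=> a_pres G_sym p; have [eta [eta_hom eta_gen _]] := a_pres.2 _ _ (nil2_gen_rel R G_sym).
apply/eqP => ap0; have := congr1 (fun z : nil2Lie R G => z.1 0 p) (eta_gen p).
by rewrite ap0 (lie_hom0 eta_hom) /= !mxE !eqxx => /eqP; rewrite eq_sym oner_eq0.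
Qed.

Lemma opp_gen_omega1_supp (R : comNzRingType) n (L : lieAlgebra R) (a : 'I_n -> L) i :
  a i != 0 -> is_omega1 a (- a i) (- a i) /\ in_supp a i (- a i).
Proof.
move=> ai0; pose al (k : 'I_1) : {ffun 'I_n -> nat} := [ffun j => nat_of_bool (i == j)].
have dec : mdecomp a (- a i) al (fun=> - a i).
  split=> [k k' _|k|]; first by rewrite (ord1 k) (ord1 k').
    split; first by apply/eqP; rewrite oppr_eq0.
    exists 1%N, (fun=> -1), (fun=> LLeaf i); split=> [k0 j|]; first by rewrite ffunE.
    by rewrite big_ord1 scaleN1r.
  by rewrite big_ord1.
have deg1 : (\sum_(j < n) al ord0 j)%N = 1%N.
  rewrite (bigD1 i) //= big1 => [|j ji]; first by rewrite ffunE eqxx.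
  by rewrite ffunE eq_sym (negbTE ji).
split; exists 1%N, al, (fun=> - a i); split => //.
  by rewrite big_ord1_cond deg1.
by exists ord0; rewrite ffunE eqxx.
Qed.

Theorem lemma4 (R : idomainType) (n : nat) (G : rel 'I_n)
    (L : lieAlgebra R) (a : 'I_n -> L) (L1 L2 : L -> Prop) (g : 'I_n -> L) :
  (2 <= n)%N ->
  symmetric G -> irreflexive G ->
  graph_connected (compl_graph G) ->
  presented G a ->
  direct_sum L1 L2 ->
  (forall i, dcomp1 L1 L2 (a i) (a i + g i) /\ dcomp2 L1 L2 (a i) (- g i)) ->
  (forall i w, is_omega1 a (g i) w -> ~ in_supp a i w) ->
  forall i, g i = 0.
Proof.
move=> n_gt1 G_sym _ G_conn a_pres L12 g_dec g_supp i.
have [[L1_agi _] [L2_gi _]] := g_dec i.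
have [L1_0|L2_0] := direct_sum_trivial n_gt1 G_sym G_conn a_pres L12.
  have gi : g i = - a i by apply/eqP; rewrite -addr_eq0 addrC (L1_0 _ L1_agi).
  have [omega supp] := opp_gen_omega1_supp (presented_gen_neq0 a_pres G_sym i).
  by have := g_supp i (- a i); rewrite gi => /(_ omega supp).
by apply: oppr_inj; rewrite oppr0 (L2_0 _ L2_gi).
Qed.
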